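(* Let $m>0$ and $\bar b>0$. For real $\lambda$ and a real symmetric matrix $\widehat{\bar P}=\begin{pmatrix}\bar p_{11}&\bar p_{12}\\ \bar p_{12}&\bar p_{22}\end{pmatrix}$ define the symmetric $3\times3$ matrix $\widehat{\bar T}(\lambda,\widehat{\bar P})$ with entries $$\bar t_{11}=(\lambda-2\bar b\sqrt m)\bar p_{11}+2\sqrt m\,\bar p_{12},\quad \bar t_{12}=-\bar b\sqrt m\,\bar p_{12}+\sqrt m\,\bar p_{22}+\lambda\bar p_{12},\quad \bar t_{13}=-\bar p_{11}/\sqrt m+\sqrt m/2,$$ $$\bar t_{22}=\lambda\bar p_{22}-\tfrac m2\lambda,\quad \bar t_{23}=-\bar p_{12}/\sqrt m+\lambda/2,\quad \bar t_{33}=0.$$ Let $\bar r^\star$ be the unique real number with $\bar r^\star\bar b^2-2(\bar r^{\star2}+1)\bar b+\bar r^{\star3}+3\bar r^\star=0$, and $\lambda^\star=\sqrt m\,\bar r^\star$. Then $\lambda^\star$ equals the maximum of $\lambda$ over all pairs $(\lambda,\widehat{\bar P})$ satisfying $\widehat{\bar T}(\lambda,\widehat{\bar P})\preceq0$ and $\widehat{\bar P}\succeq0$; it is attained at $\widehat{\bar P}=\frac m2\begin{pmatrix}1&\bar r^\star\\ \bar r^\star&\bar r^{\star2}\end{pmatrix}$.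
   Context: The matrix $\widehat{\bar T}$ is the Lyapunov linear matrix inequality matrix (with no smoothness multiplier) for the first-order system $\dot v=-\bar b\sqrt m v-\nabla f(x)/\sqrt m$, $\dot x=\sqrt m v$, equivalent to $\ddot x+\bar b\sqrt m\dot x+\nabla f(x)=0$. $\preceq0$/$\succeq0$ denote negative/positive semidefiniteness. *)

From mathcomp Require Import all_boot all_order all_algebra.
From mathcomp Require Import reals.
Set Implicit Arguments. Unset Strict Implicit. Unset Printing Implicit Defensive.
Import Order.TTheory GRing.Theory Num.Theory.
Local Open Scope ring_scope.

Definition psdmx (R : realType) (n : nat) (A : 'M[R]_n) : Prop :=
  A^T = A /\ forall x : 'cV[R]_n, 0 <= (x^T *m A *m x) ord0 ord0.

Definition nsdmx (R : realType) (n : nat) (A : 'M[R]_n) : Prop := psdmx (- A).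

Definition sym2 (R : realType) (a b c : R) : 'M[R]_2 :=
  \matrix_(i < 2, j < 2)
    match nat_of_ord i, nat_of_ord j with
    | 0, 0 => a
    | 1, 1 => c
    | _, _ => b
    end.

Definition Tbar (R : realType) (m bb l : R) (P : 'M[R]_2) : 'M[R]_3 :=
  let sm := Num.sqrt m in
  let p11 := P ord0 ord0 in
  let p12 := P ord0 ord_max in
  let p22 := P ord_max ord_max in
  let t11 := (l - 2 * bb * sm) * p11 + 2 * sm * p12 in
  let t12 := - bb * sm * p12 + sm * p22 + l * p12 in
  let t13 := - p11 / sm + sm / 2 in
  let t22 := l * p22 - m / 2 * l in
  let t23 := - p12 / sm + l / 2 in
  let t33 := 0 in
  \matrix_(i < 3, j < 3)
    match nat_of_ord i, nat_of_ord j with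
    | 0, 0 => t11
    | 0, 1 | 1, 0 => t12
    | 0, _ | _, 0 => t13
    | 1, 1 => t22
    | 1, _ | _, 1 => t23
    | _, _ => t33
    end.

Definition rcubic (R : realType) (bb r : R) : R :=
  r * bb ^+ 2 - 2 * (r ^+ 2 + 1) * bb + r ^+ 3 + 3 * r.

Definition feasible (R : realType) (m bb l : R) (P : 'M[R]_2) : Prop :=
  nsdmx (Tbar m bb l P) /\ psdmx P.

From mathcomp Require Import all_boot all_order all_algebra.
From mathcomp Require Import reals ring lra.
Import Order.TTheory GRing.Theory Num.Theory.
Set Implicit Arguments. Unset Strict Implicit.
Local Open Scope ring_scope.

(* Write s = sqrt m, so that m = s^2, and work with an
   arbitrary s > 0 (section ScaledLMI); the theorem is recovered at the end by
   taking s := Num.sqrt m.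
   - Matrix facts: every 2x2 principal submatrix of a positive semidefinite
     matrix is psd (giving a >= 0, c >= 0, b^2 <= ac), so a zero diagonal entry
     forces its row and column to vanish; and c u u^T is psd for c >= 0.
   - Cubic facts: every root r of the cubic satisfies 0 < r <= 1, the cubic is
     strictly increasing on [-1, 1] (hence rstar is unique and any r in [-1, 1]
     with cubic <= 0 satisfies r <= rstar), and at a root 2 bb - 3 r > 0.
   - Attainment: at lambda = s rstar both -T and P are nonnegative multiples of
     rank-one matrices u u^T, hence psd.
   - Optimality: since t33 = 0, feasibility forces t13 = t23 = 0, which fixes
     p11 = m/2 and p12 = s lambda / 2.  With r = lambda / s and
     p22 = m/2 (r^2 + q), the psd conditions reduce to q >= 0,
     r (1 - r^2 - q) >= 0 and -r cubic(r) >= q r^2 + q^2, so either r <= 0 or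
     r^2 <= 1 and cubic(r) <= 0; in both cases r <= rstar. *)

Definition psd2 (R : numDomainType) (a b c : R) : Prop :=
  forall x y : R, 0 <= a * x * x + 2 * b * x * y + c * y * y.

Lemma psd2_necessary (R : realFieldType) (a b c : R) :
  psd2 a b c -> [/\ 0 <= a, 0 <= c & b * b <= a * c].
Proof.
move=> qf_ge0.
have a_ge0 : 0 <= a by have := qf_ge0 1 0; lra.
have c_ge0 : 0 <= c by have := qf_ge0 0 1; lra.
split => //; have [c0 | c_neq0] := eqVneq c 0.
  move: (qf_ge0 b (- (a + 2))); rewrite c0 mulr0.
  have -> : a * b * b + 2 * b * b * - (a + 2) + 0 * - (a + 2) * - (a + 2)
          = - ((b * b) * (a + 4)) by ring.
  by rewrite oppr_ge0 pmulr_lle0 //; lra.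
have c_gt0 : 0 < c by rewrite lt0r c_neq0.
have := qf_ge0 c (- b).
have -> : a * c * c + 2 * b * c * - b + c * - b * - b = c * (a * c - b * b) by ring.
by rewrite pmulr_rge0 // subr_ge0.
Qed.

Lemma psd2_zero_corner (R : realFieldType) (a b : R) : psd2 a b 0 -> b = 0.
Proof.
case/psd2_necessary => _ _; rewrite mulr0 => bb_le0.
by apply/eqP; rewrite -sqrf_eq0 eq_le sqr_ge0 andbT expr2.
Qed.

Lemma qf_delta (R : realType) n (A : 'M[R]_n) (i j : 'I_n) :
  (delta_mx i 0)^T *m A *m delta_mx j 0 = (A i j)%:M :> 'M_1.
Proof. by rewrite [LHS]mx11_scalar trmx_delta -rowE -colE !mxE. Qed.

(* Principal 2x2 submatrices of a psd matrix are psd: test on x e_i + y e_j. *)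
Lemma psdmx_principal (R : realType) n (A : 'M[R]_n) (i j : 'I_n) :
  psdmx A -> psd2 (A i i) (A i j) (A j j).
Proof.
move=> [symA posA] x y.
have Aji : A j i = A i j by rewrite -[in LHS]symA mxE.
have := posA (x *: delta_mx i 0 + y *: delta_mx j 0).
rewrite !(linearD, linearZ) /= !(mulmxDl, mulmxDr) -!scalemxAl !qf_delta !mxE /= Aji.
by congr (0 <= _); ring.
Qed.

Lemma psdmx_zero_diag (R : realType) n (A : 'M[R]_n) (i j : 'I_n) :
  psdmx A -> A j j = 0 -> A i j = 0.
Proof.
move=> psdA Ajj0; have := psdmx_principal i j psdA.
by rewrite Ajj0 => /psd2_zero_corner.
Qed.

(* Nonnegative multiples of rank-one matrices u u^T are psd: x^T u u^T x = (u^T x)^2. *)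
Lemma psdmx_rank1 (R : realType) n (c : R) (u : 'cV[R]_n) :
  0 <= c -> psdmx (c *: (u *m u^T)).
Proof.
move=> c_ge0; split; first by rewrite linearZ /= trmx_mul trmxK.
move=> x; rewrite -scalemxAr -scalemxAl !mulmxA -(mulmxA (x^T *m u)).
rewrite -[x^T *m u]trmxK trmx_mul trmxK mxE [u^T *m x]mx11_scalar.
rewrite tr_scalar_mx -scalar_mxM !mxE /= mulr1n.
by apply: mulr_ge0 => //; rewrite -expr2 sqr_ge0.
Qed.

(* Every root of the cubic lies in ]0, 1]; the key identity is
   (r bb - r^2 - 1)^2 = 1 - r^2 + r cubic(r). *)
Lemma rcubic_root_bounds (R : realType) (bb r : R) :
  0 < bb -> rcubic bb r = 0 -> 0 < r /\ r * r <= 1.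
Proof.
move=> bb_gt0 root.
have sq : (r * bb - (r * r + 1)) ^+ 2 = 1 - r * r + r * rcubic bb r.
  by rewrite /rcubic; ring.
rewrite root mulr0 addr0 in sq.
split; last by have := sqr_ge0 (r * bb - (r * r + 1)); lra.
rewrite ltNge; apply/negP => r_le0.
have split_cubic : rcubic bb r = r * (bb ^+ 2 + r ^+ 2 + 3) - 2 * (r ^+ 2 + 1) * bb.
  by rewrite /rcubic; ring.
have : r * (bb ^+ 2 + r ^+ 2 + 3) <= 0.
  by apply: mulr_le0_ge0 => //; have := sqr_ge0 bb; have := sqr_ge0 r; lra.
have : 0 < 2 * (r ^+ 2 + 1) * bb by apply: mulr_gt0 => //; have := sqr_ge0 r; lra.
by rewrite -root split_cubic; lra.
Qed.

(* The cubic is strictly increasing on [-1, 1]: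
   cubic(r1) - cubic(r2) = (r1 - r2) ((bb - r1 - r2)^2 - r1 r2 + 3). *)
Lemma rcubic_le_mono (R : realType) (bb r1 r2 : R) :
  r1 * r1 <= 1 -> r2 * r2 <= 1 -> rcubic bb r1 <= rcubic bb r2 -> r1 <= r2.
Proof.
move=> r1_le1 r2_le1; apply: contraTT; rewrite -!ltNge => r21.
have diff : rcubic bb r1 - rcubic bb r2
          = (r1 - r2) * ((bb - r1 - r2) ^+ 2 - r1 * r2 + 3).
  by rewrite /rcubic; ring.
have pos : 0 < (bb - r1 - r2) ^+ 2 - r1 * r2 + 3.
  by have := sqr_ge0 (bb - r1 - r2); have := sqr_ge0 (r1 - r2); rewrite !expr2; nra.
rewrite -subr_gt0 diff; apply: mulr_gt0 => //; lra.
Qed.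

Lemma rcubic_root_unique (R : realType) (bb r1 r2 : R) :
  0 < bb -> rcubic bb r1 = 0 -> rcubic bb r2 = 0 -> r1 = r2.
Proof.
move=> bb_gt0 root1 root2.
have [_ r1_le1] := rcubic_root_bounds bb_gt0 root1.
have [_ r2_le1] := rcubic_root_bounds bb_gt0 root2.
by apply/le_anti/andP; split; apply: (rcubic_le_mono (bb := bb)); rewrite ?root1 ?root2.
Qed.

(* At a root, 2 bb - 3 r = r (bb - r)^2 > 0 (note bb <> r since cubic(bb) = bb). *)
Lemma rcubic_root_lead (R : realType) (bb r : R) :
  0 < bb -> rcubic bb r = 0 -> 0 < 2 * bb - 3 * r.
Proof.
move=> bb_gt0 root; have [r_gt0 _] := rcubic_root_bounds bb_gt0 root.
have lead : r * (2 * bb - 3 * r) = r * (r * (bb - r) ^+ 2) - r * rcubic bb r.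
  by rewrite /rcubic; ring.
have bb_neq_r : bb - r != 0.
  rewrite subr_eq0; apply/eqP => bb_r.
  have : rcubic bb bb = bb by rewrite /rcubic; ring.
  by rewrite {2}bb_r root; lra.
rewrite root mulr0 subr0 in lead; rewrite (mulfI (lt0r_neq0 r_gt0) lead).
by rewrite pmulr_rgt0 // exprn_even_gt0.
Qed.

(* At a root the reduced matrix [2bb-3r, bb r-2r^2; bb r-2r^2, r-r^3] is
   singular: its determinant is -r cubic(r). *)
Lemma rcubic_root_singular (R : realType) (bb r : R) :
  rcubic bb r = 0 -> (2 * bb - 3 * r) * (r - r ^+ 3) = (bb * r - 2 * r ^+ 2) ^+ 2.
Proof.
move=> root; apply/eqP; rewrite -subr_eq0.
have -> : (2 * bb - 3 * r) * (r - r ^+ 3) - (bb * r - 2 * r ^+ 2) ^+ 2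
        = - r * rcubic bb r by rewrite /rcubic; ring.
by rewrite root mulr0.
Qed.

Definition col2 (R : realType) (a b : R) : 'cV[R]_2 :=
  \col_(i < 2) match nat_of_ord i with 0 => a | _ => b end.

Definition col3 (R : realType) (a b c : R) : 'cV[R]_3 :=
  \col_(i < 3) match nat_of_ord i with 0 => a | 1 => b | _ => c end.

Section ScaledLMI.
Variables (R : realType) (s bb : R).
Hypotheses (s_gt0 : 0 < s) (bb_gt0 : 0 < bb).

Lemma sqrt_sqr_pos : Num.sqrt (s ^+ 2) = s.
Proof. by rewrite sqrtr_sqr gtr0_norm. Qed.

Lemma Tbar_optimum_rank1 (r : R) : rcubic bb r = 0 ->
  let u := col3 (2 * bb - 3 * r) (bb * r - 2 * r ^+ 2) 0 in
  - Tbar (s ^+ 2) bb (s * r) ((s ^+ 2 / 2) *: sym2 1 r (r ^+ 2))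
  = (s ^+ 3 / (2 * (2 * bb - 3 * r))) *: (u *m u^T).
Proof.
move=> root u; have lead_neq0 := lt0r_neq0 (rcubic_root_lead bb_gt0 root).
have s_neq0 := lt0r_neq0 s_gt0; have singular := rcubic_root_singular root.
apply/matrixP => i j; rewrite /Tbar sqrt_sqr_pos !mxE big_ord1 !mxE /=.
case: i => [[|[|[|i]]] Hi] //; case: j => [[|[|[|j]]] Hj] //=;
  by rewrite -?expr2 -?singular; field; rewrite ?lead_neq0 ?s_neq0.
Qed.

Lemma sym2_rank1 (r : R) : sym2 1 r (r ^+ 2) = col2 1 r *m (col2 1 r)^T.
Proof.
apply/matrixP => i j; rewrite !mxE big_ord1 !mxE.
by case: i => [[|[|i]] Hi] //; case: j => [[|[|j]] Hj] //=; rewrite ?expr2 ?mulr1 ?mul1r.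
Qed.

Lemma feasible_optimum (r : R) : rcubic bb r = 0 ->
  feasible (s ^+ 2) bb (s * r) ((s ^+ 2 / 2) *: sym2 1 r (r ^+ 2)).
Proof.
move=> root; split; last first.
  by rewrite sym2_rank1; apply: psdmx_rank1; rewrite divr_ge0 // exprn_ge0 // ltW.
rewrite /nsdmx Tbar_optimum_rank1 //; apply: psdmx_rank1.
by rewrite divr_ge0 ?exprn_ge0 ?ltW // mulr_gt0 // rcubic_root_lead.
Qed.

Lemma feasible_reduced (r : R) (P : 'M[R]_2) :
  feasible (s ^+ 2) bb (s * r) P -> 0 < r -> r * r <= 1 /\ rcubic bb r <= 0.
Proof.
move=> [nsdT psdP] r_gt0; have s_neq0 := lt0r_neq0 s_gt0.
pose mid : 'I_3 := Ordinal (isT : (1 < 3)%N).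
(* t33 = 0 forces t13 = t23 = 0, which determines p11 and p12. *)
have T22 : (- Tbar (s ^+ 2) bb (s * r) P) ord_max ord_max = 0.
  by rewrite !mxE /= oppr0.
have := psdmx_zero_diag ord0 nsdT T22; have := psdmx_zero_diag mid nsdT T22.
rewrite /Tbar sqrt_sqr_pos !mxE /= => /eqP; rewrite oppr_eq0 => /eqP t23 /eqP.
rewrite oppr_eq0 => /eqP t13.
have p11E : P ord0 ord0 = s ^+ 2 / 2.
  transitivity (s * (s / 2 - (- P ord0 ord0 / s + s / 2))); first by field.
  by rewrite t13; field.
have p12E : P ord0 ord_max = s ^+ 2 * r / 2.
  transitivity (s * (s * r / 2 - (- P ord0 ord_max / s + s * r / 2))); first by field.
  by rewrite t23; field.
have [_ _ detP] := psd2_necessary (psdmx_principal ord0 ord_max psdP).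
have [_ nt22_ge0 detT] := psd2_necessary (psdmx_principal ord0 mid nsdT).
move: nt22_ge0 detT detP; rewrite /Tbar sqrt_sqr_pos !mxE /= p11E p12E.
have [q ->] : exists q, P ord_max ord_max = s ^+ 2 / 2 * (r ^+ 2 + q).
  by exists (2 * P ord_max ord_max / s ^+ 2 - r ^+ 2); field.
have c2_gt0 : 0 < s ^+ 2 / 2 by rewrite divr_gt0 // exprn_gt0.
have c3_gt0 : 0 < s ^+ 3 / 2 by rewrite divr_gt0 // exprn_gt0.
move=> nt22_ge0; rewrite -subr_ge0 => detT; rewrite -subr_ge0 => detP.
have q_ge0 : 0 <= q.
  move: detP; rewrite [X in 0 <= X -> _](_ : _ = (s ^+ 2 / 2) ^+ 2 * q); last by field.
  by rewrite pmulr_rge0 // exprn_gt0.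
have r2q_le1 : 0 <= 1 - r ^+ 2 - q.
  move: nt22_ge0.
  rewrite [X in 0 <= X -> _](_ : _ = s ^+ 3 / 2 * r * (1 - r ^+ 2 - q)); last by field.
  by rewrite pmulr_rge0 // mulr_gt0.
have cubic_dom : 0 <= - r * rcubic bb r - q * r ^+ 2 - q ^+ 2.
  move: detT; rewrite [X in 0 <= X -> _](_ : _
    = (s ^+ 3 / 2) ^+ 2 * (- r * rcubic bb r - q * r ^+ 2 - q ^+ 2)).
    by rewrite pmulr_rge0 // exprn_gt0.
  by rewrite /rcubic; field.
split; first by rewrite -expr2; lra.
have : 0 <= r * - rcubic bb r.
  rewrite mulrN -mulNr.
  by have := addr_ge0 (mulr_ge0 q_ge0 (sqr_ge0 r)) (sqr_ge0 q); lra.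
by rewrite pmulr_rge0 // oppr_ge0.
Qed.

Lemma feasible_bound (rs l : R) (P : 'M[R]_2) :
  rcubic bb rs = 0 -> feasible (s ^+ 2) bb l P -> l <= s * rs.
Proof.
move=> root; have [rs_gt0 rs_le1] := rcubic_root_bounds bb_gt0 root.
have [r ->] : exists r, l = s * r by exists (l / s); field; rewrite lt0r_neq0.
move=> feas; rewrite ler_pM2l //.
have [r_le0 | r_gt0] := lerP r 0; first lra.
have [r_le1 cubic_le0] := feasible_reduced feas r_gt0.
by apply: (rcubic_le_mono (bb := bb)) r_le1 rs_le1 _; rewrite root.
Qed.

End ScaledLMI.

Theorem theorem6 (R : realType) (m bb rs : R) :
  0 < m -> 0 < bb -> rcubic bb rs = 0 ->
  (forall r : R, rcubic bb r = 0 -> r = rs) /\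
  feasible m bb (Num.sqrt m * rs) ((m / 2) *: sym2 1 rs (rs ^+ 2)) /\
  (forall (l : R) (P : 'M[R]_2), feasible m bb l P -> l <= Num.sqrt m * rs).
Proof.
move=> m_gt0 bb_gt0 root; have s_gt0 : 0 < Num.sqrt m by rewrite sqrtr_gt0.
have sqr_s : Num.sqrt m ^+ 2 = m by rewrite sqr_sqrtr // ltW.
split; first by move=> r root_r; apply: rcubic_root_unique bb_gt0 root_r root.
split; first by have := feasible_optimum s_gt0 bb_gt0 root; rewrite sqr_s.
move=> l P; have := feasible_bound s_gt0 bb_gt0 root (l := l) (P := P).
by rewrite sqr_s.
Qed.
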